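(* $\chi_D(LG_3)\le 5$.
   Context: Let $V=\mathbb{F}_3^3$; $LG_3$ is the bipartite graph whose vertices are the $1$-dimensional subspaces (''points'') and the $2$-dimensional subspaces (''lines'') of $V$, a point being adjacent to a line iff it is contained in it. A coloring is distinguishing if the only graph automorphism mapping every color class onto itself is the identity; $\chi_D(G)$ is the minimum number of colors of a proper distinguishing coloring of $G$. *)

From HB Require Import structures.
From mathcomp Require Import all_boot all_order all_algebra all_fingroup.
Set Implicit Arguments. Unset Strict Implicit. Unset Printing Implicit Defensive.
Import GRing.Theory.

(* V = F_3^3, vectors are row vectors 'rV['F_3]_3.  A subspace of V is
   represented canonically by the square matrix <<A>>%MS (mxalgebra's
   canonical representative of a row space): two 3x3 matrices in canonical
   form are equal iff their row spaces are equal. *)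
Definition F3 := 'F_3.

Definition is_subspace_rep (A : 'M[F3]_3) : bool := (<<A>>%MS == A).

Definition is_point (A : 'M[F3]_3) : bool := is_subspace_rep A && (\rank A == 1)%N.
Definition is_line  (A : 'M[F3]_3) : bool := is_subspace_rep A && (\rank A == 2)%N.

Definition is_vertex (A : 'M[F3]_3) : bool := is_point A || is_line A.

Definition LG3_vertex : predArgType := {A : 'M[F3]_3 | is_vertex A}.
HB.instance Definition _ := [isSub for (@sval _ is_vertex : LG3_vertex -> 'M[F3]_3)].
HB.instance Definition _ := [Finite of LG3_vertex by <:].

Definition LG3_adj (x y : LG3_vertex) : bool :=
  (is_point (val x) && is_line (val y) && (val x <= val y)%MS) ||
  (is_point (val y) && is_line (val x) && (val y <= val x)%MS).

Definition LG3_aut (f : {perm LG3_vertex}) : Prop :=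
  forall x y, LG3_adj (f x) (f y) = LG3_adj x y.

Definition proper_coloring (k : nat) (c : LG3_vertex -> 'I_k) : Prop :=
  forall x y, LG3_adj x y -> c x != c y.

Definition distinguishing (k : nat) (c : LG3_vertex -> 'I_k) : Prop :=
  forall f : {perm LG3_vertex}, LG3_aut f -> (forall x, c (f x) = c x) -> f = 1%g.

Definition chiD_le (k : nat) : Prop :=
  exists c : LG3_vertex -> 'I_k, proper_coloring c /\ distinguishing c.

From mathcomp Require Import all_boot all_order all_algebra all_fingroup.
Import GRing.Theory.
Set Implicit Arguments. Unset Strict Implicit. Unset Printing Implicit Defensive.

(* LG_3 is the point-line incidence graph of PG(2,3).  Normalising the 26
   nonzero vectors of F_3^3 up to sign gives 13 representatives; the points
   are their spans and the lines their orthogonal complements, so a point lies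
   on a line iff the two representatives are orthogonal mod 3.  On this
   26-vertex model a 5-colouring is checked by computation to be proper and to
   admit an ordering of the vertices in which each vertex is the only one of
   its colour with its adjacencies to the earlier ones.  A colour-preserving
   automorphism must then fix the vertices one after the other. *)

Section ResolvingSequence.

Variables (T C : eqType) (vs : seq T) (e : rel T) (c : T -> C).
Hypothesis vs_total : forall x, x \in vs.

Fixpoint resolving (known s : seq T) : bool :=
  if s is x :: s' then
    all (fun z => (c z == c x) && all (fun u => e u z == e u x) known ==> (z == x)) vs
    && resolving (x :: known) s'
  else true.

Variable f : T -> T.
Hypotheses (f_adj : forall x y, e (f x) (f y) = e x y)
           (f_color : forall x, c (f x) = c x).

Lemma resolving_fixed known s :
  {in known, forall x, f x = x} -> resolving known s -> {in s, forall x, f x = x}.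
Proof.
elim: s known => //= x s IH known fix_known /andP[/allP x_resolved s_resolving].
have fx : f x = x.
  apply/eqP/(implyP (x_resolved _ (vs_total (f x)))).
  rewrite f_color eqxx; apply/allP => u /fix_known fu.
  by rewrite -{1}fu f_adj.
have fix_known' : {in x :: known, forall u, f u = u}.
  by move=> u /predU1P[-> // | ]; apply: fix_known.
by move=> y /predU1P[-> // | ]; apply: IH fix_known' s_resolving y.
Qed.

Lemma resolving_id s : resolving [::] s -> all (mem s) vs -> f =1 id.
Proof.
move=> s_resolving /allP s_total x.
exact: (resolving_fixed (known := [::])) s_resolving x (s_total x (vs_total x)).
Qed.

End ResolvingSequence.

Local Open Scope ring_scope.

Section SubspaceGenerators.

Variables (F : fieldType) (n : nat).

Lemma genmx_rank1 m (A : 'M[F]_(m, n)) (v : 'rV_n) :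
  \rank A = 1%N -> v != 0 -> (v <= A)%MS -> <<A>>%MS = <<v>>%MS.
Proof.
move=> rankA v_neq0 vA; apply/esym/genmxP.
by rewrite -(mxrank_leqif_eq vA).2 rank_rV v_neq0 rankA.
Qed.

Lemma genmx_corank1 (A : 'M[F]_n) (w : 'rV_n) :
  (\rank A).+1 = n -> w != 0 -> (w <= kermx A^T)%MS ->
  <<A>>%MS = <<kermx w^T>>%MS.
Proof.
move=> rankA w_neq0 wA.
have Aw : (A <= kermx w^T)%MS.
  by rewrite sub_kermx -trmx_eq0 trmx_mul trmxK -sub_kermx.
apply/genmxP; rewrite -(mxrank_leqif_eq Aw).2.
by rewrite mxrank_ker mxrank_tr rank_rV w_neq0 subn1 -[n in n.-1]rankA.
Qed.

Lemma sub_genmx_kermx_tr (v w : 'rV[F]_n) :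
  (<<v>> <= <<kermx w^T>>)%MS = (v *m w^T == 0).
Proof. by rewrite !genmxE sub_kermx. Qed.

End SubspaceGenerators.

Lemma mx11_eq0 (R : nzRingType) (A : 'M[R]_1) : (A == 0) = (A 0 0 == 0).
Proof.
apply/eqP/eqP => [-> | A00]; first by rewrite mxE.
by apply/matrixP => i j; rewrite !ord1 A00 mxE.
Qed.

Lemma natr_F3_eq0 k : ((k%:R : F3) == 0) = (3 %| k)%N.
Proof. by rewrite (dvdn_pcharf (pchar_Fp (isT : prime 3))). Qed.

Definition vec3 (u : nat * nat * nat) : 'rV[F3]_3 :=
  let: (a, b, c) := u in \row_(i < 3) (nth 0%N [:: a; b; c] i)%:R.

Definition dotn (u w : nat * nat * nat) : nat :=
  let: (a, b, c) := u in let: (a', b', c') := w in (a * a' + b * b' + c * c')%N.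

Lemma dotnC : commutative dotn.
Proof. by move=> [[a b] c] [[a' b'] c']; rewrite /= mulnC (mulnC b) (mulnC c). Qed.

Lemma vec3_mul_tr_eq0 u w : (vec3 u *m (vec3 w)^T == 0) = (3 %| dotn u w)%N.
Proof.
case: u w => [[a b] c] [[a' b'] c'].
rewrite mx11_eq0 !mxE !big_ord_recr big_ord0 /= !mxE /= add0r.
by rewrite -!natrM -!natrD natr_F3_eq0.
Qed.

Lemma vec3_eq0 a b c : (vec3 (a, b, c) == 0) = [&& 3 %| a, 3 %| b & 3 %| c]%N.
Proof.
apply/eqP/and3P => [vec0 | [a3 b3 c3]].
  have entry0 (i : 'I_3) : ((nth 0%N [:: a; b; c] i)%:R : F3) = 0.
    by have := congr1 (fun v : 'rV_3 => v 0 i) vec0; rewrite !mxE.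
  by split; rewrite -natr_F3_eq0; apply/eqP;
    [exact: (entry0 0) | exact: (entry0 1) | exact: (entry0 ord_max)].
by apply/rowP => -[[|[|[|//]]] ?]; rewrite !mxE; apply/eqP; rewrite natr_F3_eq0.
Qed.

Lemma vec3_mod a b c : vec3 (a %% 3, b %% 3, c %% 3)%N = vec3 (a, b, c).
Proof. by apply/rowP => -[[|[|[|//]]] ?]; rewrite !mxE /= Fp_nat_mod. Qed.

Lemma vec3_scale k a b c : vec3 (k * a, k * b, k * c)%N = k%:R *: vec3 (a, b, c).
Proof. by apply/rowP => -[[|[|[|//]]] ?]; rewrite !mxE /= natrM. Qed.

Lemma natr_F3_val (x : F3) : (val x)%:R = x.
Proof. exact: (natr_Zp (p' := 1)). Qed.

Lemma vec3_entries (v : 'rV[F3]_3) :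
  v = vec3 (nat_of_ord (v 0 0), nat_of_ord (v 0 1), nat_of_ord (v 0 2)).
Proof.
apply/rowP => i; rewrite mxE.
by case: i => -[|[|[|//]]] ? /=; rewrite natr_F3_val; congr (v _ _); apply: val_inj.
Qed.

Definition normal_reps : seq (nat * nat * nat) :=
  [:: (0, 0, 1); (0, 1, 0); (0, 1, 1); (0, 1, 2); (1, 0, 0); (1, 0, 1); (1, 0, 2);
      (1, 1, 0); (1, 1, 1); (1, 1, 2); (1, 2, 0); (1, 2, 1); (1, 2, 2)]%N.

Definition rep (j : nat) : nat * nat * nat := nth (0, 0, 1)%N normal_reps j.

Lemma normal_reps_cover :
  all (fun a => all (fun b => all (fun c =>
      [&& a == 0, b == 0 & c == 0]%N
      || has (fun j => has (fun k => rep j == (k * a %% 3, k * b %% 3, k * c %% 3))%N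
                          (iota 0 3)) (iota 0 13))
    (iota 0 3)) (iota 0 3)) (iota 0 3).
Proof. by vm_compute. Qed.

Lemma normal_reps_neq0 :
  all (fun u => let: (a, b, c) := u in ~~ [&& 3 %| a, 3 %| b & 3 %| c]%N) normal_reps.
Proof. by vm_compute. Qed.

Lemma rep_neq0 (j : 'I_13) : vec3 (rep j) != 0.
Proof.
have : rep j \in normal_reps by apply: mem_nth.
by move/(allP normal_reps_neq0); case: (rep j) => [[a b] c]; rewrite vec3_eq0.
Qed.

Lemma rep_sub_cover (v : 'rV[F3]_3) : v != 0 -> exists j : 'I_13, (vec3 (rep j) <= v)%MS.
Proof.
rewrite [v]vec3_entries.
have := ltn_ord (v 0 0); have := ltn_ord (v 0 1); have := ltn_ord (v 0 2).
move: (nat_of_ord (v 0 0)) (nat_of_ord (v 0 1)) (nat_of_ord (v 0 2)) => a b c c3 b3 a3.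
move: normal_reps_cover => /allP/(_ a); rewrite mem_iota => /(_ a3).
move=> /allP/(_ b); rewrite mem_iota => /(_ b3) /allP/(_ c); rewrite mem_iota => /(_ c3).
case/orP => [/and3P[/eqP-> /eqP-> /eqP->] | /hasP[j]]; first by rewrite vec3_eq0.
rewrite mem_iota => j13 /hasP[k _ /eqP rep_j] _.
exists (Ordinal j13); rewrite /= rep_j vec3_mod vec3_scale.
exact: scalemx_sub.
Qed.

(* [(false, j)] is the point spanned by [rep j], [(true, j)] the line orthogonal to it. *)
Definition model_vertex := (bool * 'I_13)%type.

(* Explicit enumerations: quantifiers over a finType do not evaluate under vm_compute. *)
Definition model_vertices : seq model_vertex :=
  [seq (b, inZp j) | b <- [:: false; true], j <- iota 0 13].

Definition model_adj : rel model_vertex :=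
  fun x y => (x.1 != y.1) && (3 %| dotn (rep x.2) (rep y.2))%N.

Definition point_colors : seq nat := [:: 4; 3; 4; 3; 4; 4; 1; 3; 4; 2; 3; 4; 0]%N.
Definition line_colors : seq nat := [:: 2; 2; 1; 3; 1; 4; 1; 1; 2; 1; 1; 2; 1]%N.

Definition model_color (x : model_vertex) : 'I_5 :=
  inZp (nth 0%N (if x.1 then line_colors else point_colors) x.2).

Definition model_order : seq model_vertex :=
  [seq (p.1, inZp p.2) | p <- [:: (false, 12); (true, 3); (true, 5); (false, 1);
    (false, 6); (false, 9); (true, 0); (false, 3); (false, 4); (true, 1); (false, 11);
    (true, 2); (true, 4); (false, 0); (false, 2); (false, 5); (false, 8); (true, 6);
    (true, 7); (false, 7); (false, 10); (true, 8); (true, 9); (true, 10); (true, 11);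
    (true, 12)]%N].

Lemma model_vertices_total x : x \in model_vertices.
Proof.
case: x => b j; have j13 : nat_of_ord j \in iota 0 13 by rewrite mem_iota ltn_ord.
by apply/allpairsP; exists (b, nat_of_ord j); rewrite valZpK; split => //; case: b.
Qed.

Lemma model_adj_separating :
  all (fun x => all (fun y => (x == y) || has (fun u => model_adj u x != model_adj u y)
    model_vertices) model_vertices) model_vertices.
Proof. by vm_compute. Qed.

Lemma model_color_proper :
  all (fun x => all (fun y => model_adj x y ==> (model_color x != model_color y))
    model_vertices) model_vertices.
Proof. by vm_compute. Qed.

Lemma model_order_resolving :
  resolving model_vertices model_adj model_color [::] model_order.
Proof. by vm_compute. Qed.

Lemma model_order_total : all (mem model_order) model_vertices.
Proof. by vm_compute. Qed.

Definition vertex_mx (x : model_vertex) : 'M[F3]_3 :=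
  if x.1 then <<kermx (vec3 (rep x.2))^T>>%MS else <<vec3 (rep x.2)>>%MS.

Lemma genmx_vertex_mx x : <<vertex_mx x>>%MS = vertex_mx x.
Proof. by rewrite /vertex_mx; case: x.1; rewrite genmx_id. Qed.

Lemma rank_vertex_mx x : \rank (vertex_mx x) = (if x.1 then 2 else 1)%N.
Proof.
by rewrite /vertex_mx; case: x.1; rewrite genmxE ?mxrank_ker ?mxrank_tr rank_rV rep_neq0.
Qed.

Lemma is_point_vertex_mx x : is_point (vertex_mx x) = ~~ x.1.
Proof.
by rewrite /is_point /is_subspace_rep genmx_vertex_mx eqxx rank_vertex_mx; case: x.1.
Qed.

Lemma is_line_vertex_mx x : is_line (vertex_mx x) = x.1.
Proof.
by rewrite /is_line /is_subspace_rep genmx_vertex_mx eqxx rank_vertex_mx; case: x.1.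
Qed.

Lemma is_vertex_mx x : is_vertex (vertex_mx x).
Proof. by rewrite /is_vertex is_point_vertex_mx is_line_vertex_mx orNb. Qed.

Definition embed (x : model_vertex) : LG3_vertex := Sub (vertex_mx x) (is_vertex_mx x).

Lemma embed_adj x y : LG3_adj (embed x) (embed y) = model_adj x y.
Proof.
rewrite /LG3_adj /model_adj !SubK !is_point_vertex_mx !is_line_vertex_mx /vertex_mx.
case: x y => [[] i] [[] j] //=; rewrite ?orbF sub_genmx_kermx_tr vec3_mul_tr_eq0 //.
by rewrite dotnC.
Qed.

Lemma embed_inj : injective embed.
Proof.
move=> x y exy; apply/eqP.
move/allP/(_ x (model_vertices_total x)): model_adj_separating.
move/allP/(_ y (model_vertices_total y)) => /orP[// | /hasP[u _]].
by rewrite -!embed_adj exy eqxx.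
Qed.

Lemma embed_surj y : exists x, embed x == y.
Proof.
case: y => A vA; case/orP: (vA) => /andP[/eqP canA /eqP rankA].
  have v_neq0 : nz_row A != 0 by rewrite nz_row_eq0 -mxrank_eq0 rankA.
  have [j rep_v] := rep_sub_cover v_neq0.
  exists (false, j); apply/eqP/val_inj; rewrite SubK /vertex_mx /= -canA.
  apply/esym/genmx_rank1 => //; first exact: rep_neq0.
  exact: submx_trans rep_v (nz_row_sub A).
have w_neq0 : nz_row (kermx A^T) != 0.
  by rewrite nz_row_eq0 -mxrank_eq0 mxrank_ker mxrank_tr rankA.
have [j rep_w] := rep_sub_cover w_neq0.
exists (true, j); apply/eqP/val_inj; rewrite SubK /vertex_mx /= -canA.
apply/esym/genmx_corank1; first by rewrite rankA.
  exact: rep_neq0.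
exact: submx_trans rep_w (nz_row_sub _).
Qed.

Definition unembed (y : LG3_vertex) : model_vertex := xchoose (embed_surj y).

Lemma unembedK : cancel unembed embed.
Proof. by move=> y; apply/eqP/(xchooseP (embed_surj y)). Qed.

Lemma embedK : cancel embed unembed.
Proof. by move=> x; apply: embed_inj; rewrite unembedK. Qed.

Definition LG3_color (y : LG3_vertex) : 'I_5 := model_color (unembed y).

Lemma LG3_color_proper : proper_coloring LG3_color.
Proof.
move=> x y; rewrite -[x]unembedK -[y]unembedK embed_adj /LG3_color !embedK.
apply/implyP; move/allP/(_ _ (model_vertices_total (unembed x))): model_color_proper.
by move/allP; apply; apply: model_vertices_total.
Qed.

Lemma LG3_color_distinguishing : distinguishing LG3_color.
Proof.
move=> f f_aut f_color.
pose g := unembed \o f \o embed.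
have g_adj x y : model_adj (g x) (g y) = model_adj x y.
  by rewrite -embed_adj !unembedK f_aut embed_adj.
have g_color x : model_color (g x) = model_color x.
  by have := f_color (embed x); rewrite /LG3_color embedK.
have g_id := resolving_id model_vertices_total g_adj g_color
  model_order_resolving model_order_total.
apply/permP => y; rewrite perm1.
by have := congr1 embed (g_id (unembed y)); rewrite /= !unembedK.
Qed.

Theorem mainTheorem16 : chiD_le 5.
Proof.
exists LG3_color; split; [exact: LG3_color_proper | exact: LG3_color_distinguishing].
Qed.
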